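(* Every almost unperforated Cu-semigroup satisfying (O5) is left-soft separative.
   Context: A Cu-semigroup is a positively ordered commutative monoid satisfying (O1)–(O4): increasing sequences have suprema; each element is the supremum of a $\ll$-increasing sequence; $\ll$ is compatible with addition; suprema of increasing sequences are additive. Here $x\ll y$ means whenever $y\le\sup_n z_n$ for increasing $(z_n)$, $x\le z_m$ for some $m$. (O5): if $x+y\le z$, $x'\ll x$, $y'\ll y$, then there is $c$ with $y'\ll c$ and $x'+c\le z\le x+c$. $\infty x=\sup_n nx$. $x$ is strongly soft if for every $x'\ll x$ there is $t$ with $x'+t\ll x$ and $x'\ll\infty t$; $S_{\mathrm{soft}}$ is the set of strongly soft elements. $S$ is almost unperforated if $(n+1)x\le ny$ for some $n\ge1$ implies $x\le y$. $S$ is left-soft separative if whenever $y,t\in S$, $x\in S_{\mathrm{soft}}$ satisfy $x+t\ll y+t$, $t\ll\infty x$ and $t\ll\infty y$, then $x\ll y$. *)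

From Stdlib Require Import Arith.

Set Implicit Arguments.

Fixpoint nmul (T : Type) (add : T -> T -> T) (zero : T) (n : nat) (x : T) : T :=
  match n with
  | O => zero
  | S m => add (nmul add zero m x) x
  end.

Section CuDefs.
Variables (T : Type) (le : T -> T -> Prop).

Definition increasing (s : nat -> T) : Prop := forall n, le (s n) (s (S n)).

Definition is_sup (s : nat -> T) (z : T) : Prop :=
  (forall n, le (s n) z) /\ (forall w, (forall n, le (s n) w) -> le z w).

Definition way_below (x y : T) : Prop :=
  forall (s : nat -> T) (z : T), increasing s -> is_sup s z -> le y z ->
    exists m, le x (s m).
End CuDefs.

Record CuSemigroup := {
  cu_carrier :> Type;
  cu_le : cu_carrier -> cu_carrier -> Prop;
  cu_add : cu_carrier -> cu_carrier -> cu_carrier;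
  cu_zero : cu_carrier;
  cu_le_refl : forall x, cu_le x x;
  cu_le_trans : forall x y z, cu_le x y -> cu_le y z -> cu_le x z;
  cu_le_antisym : forall x y, cu_le x y -> cu_le y x -> x = y;
  cu_addA : forall x y z, cu_add x (cu_add y z) = cu_add (cu_add x y) z;
  cu_addC : forall x y, cu_add x y = cu_add y x;
  cu_add0 : forall x, cu_add x cu_zero = x;
  cu_le_add : forall x y z, cu_le x y -> cu_le (cu_add x z) (cu_add y z);
  cu_le0 : forall x, cu_le cu_zero x;
  cu_O1 : forall s, increasing cu_le s -> exists z, is_sup cu_le s z;
  cu_O2 : forall x, exists s, (forall n, way_below cu_le (s n) (s (S n)))
                              /\ is_sup cu_le s x;
  cu_O3 : forall x' x y' y, way_below cu_le x' x -> way_below cu_le y' y ->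
            way_below cu_le (cu_add x' y') (cu_add x y);
  cu_O4 : forall s t a b, increasing cu_le s -> increasing cu_le t ->
            is_sup cu_le s a -> is_sup cu_le t b ->
            is_sup cu_le (fun n => cu_add (s n) (t n)) (cu_add a b)
}.

Section CuProps.
Variable Cu : CuSemigroup.

Local Notation "x <= y" := (cu_le Cu x y).
Local Notation "x << y" := (way_below (cu_le Cu) x y) (at level 70).
Local Notation "x + y" := (cu_add Cu x y).

Definition is_infty (x z : Cu) : Prop :=
  is_sup (cu_le Cu) (fun n => nmul (cu_add Cu) (cu_zero Cu) n x) z.

Definition way_below_infty (x t : Cu) : Prop :=
  exists z, is_infty t z /\ x << z.

Definition O5 : Prop :=
  forall x y z x' y', x + y <= z -> x' << x -> y' << y ->
    exists c, y' << c /\ x' + c <= z /\ z <= x + c.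

Definition strongly_soft (x : Cu) : Prop :=
  forall x', x' << x -> exists t, x' + t << x /\ way_below_infty x' t.

Definition almost_unperforated : Prop :=
  forall (x y : Cu) (n : nat), (1 <= n)%nat ->
    nmul (cu_add Cu) (cu_zero Cu) (S n) x <= nmul (cu_add Cu) (cu_zero Cu) n y ->
    x <= y.

Definition left_soft_separative : Prop :=
  forall x y t : Cu, strongly_soft x ->
    x + t << y + t -> way_below_infty t x -> way_below_infty t y -> x << y.
End CuProps.

(* Every almost unperforated Cu-semigroup satisfying (O5) is left-soft
   separative.

   Let x be strongly soft with x + t << y + t and t << infty y, and choose
   a rapidly increasing sequence (y_n) with supremum y (O2).
   - Approximation: since y + t = sup_n (y_n + t) and infty y is bounded
     by sup_n n y_n, a single index N satisfies x + t <= y_N + t and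
     t <= N y_N.
   - Cancellation: if x + t <= y' + t and t <= m y', then every x' << x is
     below y'.  Strong softness gives x' + u <= x with x' <= M u (M >= 1), whence
     (K+1) x' <= K y' for K = M(m+1) + m, and almost unperforation yields
     x' <= y'.  Since x is the supremum of such x', x <= y'.
   Hence x <= y_N << y. *)
From Stdlib Require Import Arith Lia.

Section CuFacts.
Context {C : CuSemigroup}.

Local Notation "x <= y" := (cu_le C x y).
Local Notation "x << y" := (way_below (cu_le C) x y) (at level 70).
Local Notation "x + y" := (cu_add C x y).
Local Notation "n ** x" := (nmul (cu_add C) (cu_zero C) n x) (at level 40).

Lemma is_sup_const (a : C) : is_sup (cu_le C) (fun _ => a) a.
Proof.
  split; [intro; apply cu_le_refl | intros w Hw; exact (Hw 0%nat)].
Qed.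

Lemma wb_le {x y : C} : x << y -> x <= y.
Proof.
  intro H. destruct (H (fun _ => y) y) as [m Hm]; auto using cu_le_refl.
  - intro; apply cu_le_refl.
  - apply is_sup_const.
Qed.

Lemma wb_le_trans (x y y' : C) : x << y -> y <= y' -> x << y'.
Proof.
  intros H Hy s z Hi Hs Hle. apply (H s z Hi Hs). eapply cu_le_trans; eauto.
Qed.

Lemma le_wb_trans (x' x y : C) : x' <= x -> x << y -> x' << y.
Proof.
  intros Hx H s z Hi Hs Hle. destruct (H s z Hi Hs Hle) as [m Hm].
  exists m. eapply cu_le_trans; eauto.
Qed.

Lemma add_le_mono (a b c d : C) : a <= b -> c <= d -> a + c <= b + d.
Proof.
  intros H1 H2. eapply cu_le_trans; [apply cu_le_add, H1|].
  rewrite (cu_addC C b c), (cu_addC C b d). apply cu_le_add, H2.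
Qed.

Lemma le_addr (a b : C) : a <= a + b.
Proof.
  rewrite <- (cu_add0 C a) at 1. apply add_le_mono; [apply cu_le_refl | apply cu_le0].
Qed.

Lemma add_swap (a b c : C) : a + (b + c) = b + (a + c).
Proof. rewrite !cu_addA, (cu_addC C a b). reflexivity. Qed.

Lemma increasing_mono {s : nat -> C} :
  increasing (cu_le C) s -> forall i j, (i <= j)%nat -> s i <= s j.
Proof.
  intros H i j Hij. induction Hij; [apply cu_le_refl | eapply cu_le_trans; eauto].
Qed.

Lemma nmul_le (n : nat) (x y : C) : x <= y -> n ** x <= n ** y.
Proof.
  intro H. induction n; simpl; [apply cu_le_refl | apply add_le_mono; auto].
Qed.

Lemma nmul_addn (a b : nat) (x : C) : (a + b)%nat ** x = a ** x + b ** x.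
Proof.
  induction b as [|b IH].
  - rewrite Nat.add_0_r. simpl. rewrite cu_add0. reflexivity.
  - rewrite Nat.add_succ_r. simpl. rewrite IH, cu_addA. reflexivity.
Qed.

Lemma nmul_muln (a b : nat) (x : C) : (a * b)%nat ** x = a ** (b ** x).
Proof.
  induction a as [|a IH]; [reflexivity|].
  simpl (Datatypes.S a * b)%nat. rewrite nmul_addn, IH. apply cu_addC.
Qed.

Lemma nmul_add (n : nat) (x y : C) : n ** (x + y) = n ** x + n ** y.
Proof.
  induction n as [|n IH]; simpl; [rewrite cu_add0; reflexivity|].
  rewrite IH, <- !cu_addA. f_equal. rewrite !cu_addA. f_equal. apply cu_addC.
Qed.

Lemma nmul_mono_n (a b : nat) (x : C) : (a <= b)%nat -> a ** x <= b ** x.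
Proof.
  intro H. replace b with (a + (b - a))%nat by lia. rewrite nmul_addn. apply le_addr.
Qed.

Lemma sup_nmul (s : nat -> C) (a : C) (n : nat) :
  increasing (cu_le C) s -> is_sup (cu_le C) s a ->
  is_sup (cu_le C) (fun j => n ** s j) (n ** a).
Proof.
  intros Hi Hs. induction n as [|n IH]; simpl; [apply is_sup_const|].
  apply (cu_O4 C (s := fun j => n ** s j) (t := s)); auto.
  intro j. apply nmul_le, Hi.
Qed.

Lemma wb_infty_le_nmul {a t : C} : way_below_infty C a t -> exists n, a <= n ** t.
Proof.
  intros [z [Hz Ha]]. apply (Ha (fun n => n ** t) z); [|exact Hz|apply cu_le_refl].
  intro n. apply le_addr.
Qed.

Lemma cu_approx (x : C) :
  exists s, increasing (cu_le C) s /\ is_sup (cu_le C) s x /\ forall n, s n << x.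
Proof.
  destruct (cu_O2 C x) as [s [Hs Hsup]]. exists s. split; [|split; [exact Hsup|]].
  - intro n. apply wb_le, Hs.
  - intro n. eapply wb_le_trans; [apply Hs | apply (proj1 Hsup)].
Qed.

Lemma le_of_wb_le (x y : C) : (forall x', x' << x -> x' <= y) -> x <= y.
Proof.
  intro H. destruct (cu_approx x) as [s [_ [Hsup Hwb]]].
  apply (proj2 Hsup). intro n. apply H, Hwb.
Qed.

Lemma nmul_add_cancel_le (x y t : C) (n : nat) :
  x + t <= y + t -> n ** x + t <= n ** y + t.
Proof.
  intro H. induction n as [|n IH]; simpl; [apply cu_le_refl|].
  rewrite <- (cu_addA C _ x t).
  eapply cu_le_trans; [apply add_le_mono; [apply cu_le_refl | exact H]|].
  rewrite add_swap, (cu_addC C (n ** y) y), <- cu_addA.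
  apply add_le_mono; [apply cu_le_refl | exact IH].
Qed.

Lemma wb_add_approx {ys : nat -> C} {y t a : C} :
  increasing (cu_le C) ys -> is_sup (cu_le C) ys y -> a << y + t ->
  exists n, a <= ys n + t.
Proof.
  intros Hi Hsup Ha. apply (Ha (fun n => ys n + t) (y + t)).
  - intro n. apply add_le_mono; [apply Hi | apply cu_le_refl].
  - apply cu_O4; [exact Hi | intro; apply cu_le_refl | exact Hsup | apply is_sup_const].
  - apply cu_le_refl.
Qed.

(* Second approximation: an element way below infty y is below n y_n for
   some n, since infty y is dominated by the supremum of the diagonal. *)
Lemma wb_infty_approx {ys : nat -> C} {y a : C} :
  increasing (cu_le C) ys -> is_sup (cu_le C) ys y -> way_below_infty C a y ->
  exists n, a <= n ** ys n.
Proof.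
  intros Hi Hsup [z [Hz Ha]].
  set (w := fun n => n ** ys n).
  assert (Hwi : increasing (cu_le C) w).
  { intro n. eapply cu_le_trans; [apply nmul_le, Hi | apply nmul_mono_n; lia]. }
  destruct (cu_O1 C Hwi) as [wz Hwz].
  apply (Ha w wz Hwi Hwz). apply (proj2 Hz). intro n.
  apply (proj2 (sup_nmul _ _ n Hi Hsup)). intro j.
  eapply cu_le_trans; [apply nmul_le, (increasing_mono Hi j (j + n)%nat); lia|].
  eapply cu_le_trans; [apply (nmul_mono_n _ (j + n)%nat); lia|].
  apply (proj1 Hwz).
Qed.

Lemma soft_cancel_nmul {x x' u y t : C} {M m : nat} :
  x' + u <= x -> x' <= M ** u -> x + t <= y + t -> t <= m ** y ->
  Datatypes.S (M * Datatypes.S m + m) ** x' <= (M * Datatypes.S m + m) ** y.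
Proof.
  intros Hxu HM Hxt Ht.
  replace (Datatypes.S (M * Datatypes.S m + m)) with (M * Datatypes.S m + Datatypes.S m)%nat
    by lia.
  rewrite !nmul_addn.
  eapply cu_le_trans; [apply add_le_mono; [apply cu_le_refl | apply nmul_le, HM]|].
  rewrite <- nmul_muln, (Nat.mul_comm (Datatypes.S m) M), <- nmul_add.
  eapply cu_le_trans; [apply nmul_le, Hxu|].
  eapply cu_le_trans; [apply (le_addr _ t)|].
  eapply cu_le_trans; [apply nmul_add_cancel_le, Hxt|].
  apply add_le_mono; [apply cu_le_refl | exact Ht].
Qed.

Lemma soft_cancel {x y t : C} {m : nat} :
  almost_unperforated C -> strongly_soft C x ->
  x + t <= y + t -> t <= m ** y -> x <= y.
Proof.
  intros AU Hsoft Hxt Ht. apply le_of_wb_le. intros x' Hx'.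
  destruct (Hsoft x' Hx') as [u [Hxu Hinf]].
  destruct (wb_infty_le_nmul Hinf) as [M HM].
  (* a positive multiplier keeps the exponent K of almost unperforation >= 1 *)
  assert (HM1 : x' <= Datatypes.S M ** u).
  { eapply cu_le_trans; [exact HM | apply nmul_mono_n; lia]. }
  apply (AU x' y (Datatypes.S M * Datatypes.S m + m)%nat); [lia|].
  apply (soft_cancel_nmul (wb_le Hxu) HM1 Hxt Ht).
Qed.
End CuFacts.

Theorem lemma4p7 (S : CuSemigroup) :
  almost_unperforated S -> O5 S -> left_soft_separative S.
Proof.
  intros AU _ x y t Hsoft Hxt _ Hty.
  destruct (cu_approx y) as [ys [Hi [Hsup Hwb]]].
  destruct (wb_add_approx Hi Hsup Hxt) as [n0 Hn0].
  destruct (wb_infty_approx Hi Hsup Hty) as [m Hm].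
  set (N := Nat.max n0 m).
  (* y_N serves both approximations at once. *)
  assert (HxtN : cu_le S (cu_add S x t) (cu_add S (ys N) t)).
  { eapply cu_le_trans; [exact Hn0|].
    apply add_le_mono; [apply increasing_mono; auto; lia | apply cu_le_refl]. }
  assert (HtN : cu_le S t (nmul (cu_add S) (cu_zero S) N (ys N))).
  { eapply cu_le_trans; [exact Hm|].
    eapply cu_le_trans; [apply nmul_le, (increasing_mono Hi m N); lia|].
    apply nmul_mono_n; lia. }
  apply le_wb_trans with (ys N); [|apply Hwb].
  exact (soft_cancel AU Hsoft HxtN HtN).
Qed.
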